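(* Let $k\ge3$ and let $\boldsymbol x^*$ be a pure Nash equilibrium of $\mathcal L(n,S_k)$. Then: (a) some player is located at the center $v_0$; (b) for every $x\in S_k\setminus\{v_0\}$, $\operatorname{card}\{i:x_i^*=x\}\le2$; (c) $\operatorname{card}\{i:x_i^*=v_0\}\le k$; (d) if some player is located in $S_k\setminus\{v_0\}$, then for every $j\in\{1,\dots,k\}$ the edge $[v_0,v_j]$ contains, outside $v_0$, at least two players, and the two players on $[v_0,v_j]\setminus\{v_0\}$ that are farthest from $v_0$ are located at the same point.
   Context: The star $S_k$ is the network with vertices $v_0,v_1,\dots,v_k$ and edges $[v_0,v_j]$, $j=1,\dots,k$, each of length $1$. It carries length measure $\lambda$ and shortest-path distance $d$. Location game $\mathcal L(n,S_k)$: $n$ players each choose a point of $S_k$. Consumers are distributed according to $\lambda$, and each shops at a closest occupied location. Consumers equidistant from several closest occupied locations are split equally among those locations, and the share of a location is split equally among the players located there. Payoff is the mass of consumers attracted. Nash equilibria are pure. *)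

From Stdlib Require Import Reals Lra Lia List Arith Bool ClassicalEpsilon.
Import ListNotations.
Open Scope R_scope.
Open Scope bool_scope.

(** Points of the star S_k.  [Center] is v_0; [OnEdge j t] (1 <= j <= k,
    0 < t <= 1) is the point of edge [v_0,v_j] at distance t from v_0
    (so [OnEdge j 1] is v_j). *)
Inductive point : Type :=
| Center : point
| OnEdge : nat -> R -> point.

Definition valid (k : nat) (p : point) : Prop :=
  match p with
  | Center => True
  | OnEdge j t => (1 <= j <= k)%nat /\ 0 < t <= 1
  end.

Definition dist (p q : point) : R :=
  match p, q with
  | Center, Center => 0
  | Center, OnEdge _ t => t
  | OnEdge _ t, Center => t
  | OnEdge j t, OnEdge j' s => if Nat.eqb j j' then Rabs (t - s) else t + s
  end.

Definition point_eqb (p q : point) : bool :=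
  match p, q with
  | Center, Center => true
  | OnEdge j t, OnEdge j' s =>
      Nat.eqb j j' && (if Req_EM_T t s then true else false)
  | _, _ => false
  end.

Definition profile := nat -> point.

Definition update (x : profile) (i : nat) (y : point) : profile :=
  fun m => if Nat.eqb m i then y else x m.

Definition closestb (n : nat) (x : profile) (y : point) (m : nat) : bool :=
  forallb (fun m' => if Rle_dec (dist y (x m)) (dist y (x m')) then true else false)
          (seq 0 n).

Definition card_at (n : nat) (x : profile) (p : point) : nat :=
  length (filter (fun m => point_eqb (x m) p) (seq 0 n)).

(** Number of distinct closest occupied locations to consumer y
    (each location counted once, via its first occupant). *)
Definition n_closest_locs (n : nat) (x : profile) (y : point) : nat :=
  length (filter (fun m => closestb n x y m &&
                   forallb (fun m' => negb (point_eqb (x m') (x m))) (seq 0 m))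
                 (seq 0 n)).

(** Share of consumer y going to player i: split equally among the closest
    locations, then equally among the players at the location. *)
Definition share (n : nat) (x : profile) (i : nat) (y : point) : R :=
  if closestb n x y i
  then / (INR (n_closest_locs n x y) * INR (card_at n x (x i)))
  else 0.

(** Riemann integral over [0,1] (0 if not Riemann integrable). *)
Definition integral01 (f : R -> R) : R :=
  match excluded_middle_informative (inhabited (Riemann_integrable f 0 1)) with
  | left H => RiemannInt (epsilon H (fun _ => True))
  | right _ => 0
  end.

(** Payoff: mass (w.r.t. length measure on S_k) of consumers attracted by
    player i; the center has measure zero. *)
Definition payoff (k n : nat) (x : profile) (i : nat) : R :=
  fold_right Rplus 0
    (map (fun j => integral01 (fun t => share n x i (OnEdge j t))) (seq 1 k)).

Definition is_NE (k n : nat) (x : profile) : Prop :=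
  (forall m, (m < n)%nat -> valid k (x m)) /\
  (forall i, (i < n)%nat -> forall y, valid k y ->
     payoff k n (update x i y) i <= payoff k n x i).

Definition on_edgeb (j : nat) (p : point) : bool :=
  match p with
  | Center => false
  | OnEdge j' _ => Nat.eqb j j'
  end.

Definition card_edge (n : nat) (x : profile) (j : nat) : nat :=
  length (filter (fun m => on_edgeb j (x m)) (seq 0 n)).

(* Every deviation below is evaluated edge by edge: on an edge, a player's share is a step
   function of the consumer's position, so its payoff is a finite sum of lengths of segments
   weighted by shares, and comparing the payoffs before and after a deviation reduces to
   pointwise bounds on the share, up to a step function.

   (c) If more than k players sit at the center, one of them moves a little into the edge it
   earns most on and collects there the whole of what it shared with the others.
   (b) A player at a shared location on an edge can move a little inwards or a little outwards;
   with r players at that location the two deviations give r (u - O) <= u and r O <= u, where u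
   is its payoff and O the part earned beyond its location, which is absurd for r >= 3.
   (a) If the center is empty, let b be the smallest distance of a player to the center. When
   every edge is occupied, the innermost player gains b/2 on each of the k - 1 other edges by
   moving to the center and loses at most b/2 on its own. When some edge is empty, a suitable
   player moves close to the center on that edge and gains.
   (d) With the center occupied, the outermost player of an edge cannot be alone, since it
   would gain by stepping towards its inner neighbour; hence it earns at most 1/2, while it
   would earn 3/4 in the middle of an empty edge, so no edge is empty. *)

From Pilot Require Import Defs.
From Stdlib Require Import Reals List Arith Bool Lra Lia Classical ClassicalEpsilon.
From Coquelicot Require Import Coquelicot.
Import ListNotations.
Import Defs.
Open Scope R_scope.

(** * Piecewise constant functions and their integrals *)

Definition avoids (L : list R) (t1 t2 : R) : Prop :=
  forall z, In z L -> z < t1 \/ t2 < z.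

Definition constant_between {A : Type} (L : list R) (f : R -> A) (a b : R) : Prop :=
  forall t1 t2, a < t1 -> t1 <= t2 -> t2 < b -> avoids L t1 t2 -> f t1 = f t2.

Definition piecewise_constant {A : Type} (f : R -> A) : Prop :=
  exists L, constant_between L f 0 1.

Section ConstantBetween.

Context {A : Type}.

Lemma constant_between_incl L L' (f : R -> A) a b :
  incl L L' -> constant_between L f a b -> constant_between L' f a b.
Proof. intros HL Hf t1 t2 H1 H2 H3 Hav. apply Hf; auto. intros z Hz. apply Hav, HL, Hz. Qed.

Lemma constant_between_sub L (f : R -> A) a b a' b' :
  a <= a' -> b' <= b -> constant_between L f a b -> constant_between L f a' b'.
Proof. intros Ha Hb Hf t1 t2 H1 H2 H3 Hav. apply Hf; auto; lra. Qed.

Lemma constant_between_nil (f : R -> A) a b t :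
  constant_between [] f a b -> a < t < b -> f t = f ((a + b) / 2).
Proof.
  intros Hf Ht. assert (Hav : forall t1 t2, avoids [] t1 t2) by (intros ? ? ? []).
  destruct (Rle_dec t ((a + b) / 2)); [|symmetry]; apply Hf; auto; lra.
Qed.

Lemma constant_between_drop z L (f : R -> A) a b :
  z <= a \/ b <= z -> constant_between (z :: L) f a b -> constant_between L f a b.
Proof. intros Hz Hf t1 t2 H1 H2 H3 Hav. apply Hf; auto. intros w [<-|Hw]; [lra|auto]. Qed.

Lemma constant_between_split z L (f : R -> A) a b :
  a <= z <= b -> constant_between (z :: L) f a b ->
  constant_between L f a z /\ constant_between L f z b.
Proof.
  intros Hz Hf. split; intros t1 t2 H1 H2 H3 Hav;
    (apply Hf; [lra | lra | lra | intros w [<-|Hw]; [lra | auto]]).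
Qed.

End ConstantBetween.

Lemma ex_RInt_constant_between L (f : R -> R) a b :
  a <= b -> constant_between L f a b -> ex_RInt f a b.
Proof.
  revert a b; induction L as [|z L IH]; intros a b Hab Hf.
  - apply (ex_RInt_ext (fun _ => f ((a + b) / 2))); [|apply ex_RInt_const].
    intros t Ht. rewrite Rmin_left, Rmax_right in Ht by lra.
    symmetry. exact (constant_between_nil f a b t Hf Ht).
  - destruct (Rle_dec z a) as [Hz|Hz];
      [apply IH; [lra | apply (constant_between_drop z); auto] |].
    destruct (Rle_dec b z) as [Hz'|Hz'];
      [apply IH; [lra | apply (constant_between_drop z); auto] |].
    destruct (constant_between_split z L f a b) as [Hl Hr]; [lra | auto |].
    apply ex_RInt_Chasles with z; apply IH; auto; lra.
Qed.

Lemma RInt_le_constant_between L (f g : R -> R) a b :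
  a <= b -> constant_between L f a b -> constant_between L g a b ->
  (forall t, a < t < b -> ~ In t L -> f t <= g t) -> RInt f a b <= RInt g a b.
Proof.
  revert a b; induction L as [|z L IH]; intros a b Hab Hf Hg Hle.
  - apply RInt_le; [exact Hab | eapply ex_RInt_constant_between; eauto ..|].
    intros t Ht. rewrite (constant_between_nil f a b t), (constant_between_nil g a b t) by auto.
    apply Hle; [lra | intros []].
  - assert (Hle' : forall t, a < t < b -> t <> z -> ~ In t L -> f t <= g t).
    { intros t Ht Htz Hn. apply Hle; [lra|]. intros [Hzt|Hin]; [congruence | contradiction]. }
    destruct (Rle_dec z a) as [Hz|Hz].
    { apply IH; try apply (constant_between_drop z); auto; try lra.
      intros t Ht Hn. apply Hle'; [lra | intros ->; lra | exact Hn]. }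
    destruct (Rle_dec b z) as [Hz'|Hz'].
    { apply IH; try apply (constant_between_drop z); auto; try lra.
      intros t Ht Hn. apply Hle'; [lra | intros ->; lra | exact Hn]. }
    destruct (constant_between_split z L f a b) as [Hfl Hfr]; [lra | auto |].
    destruct (constant_between_split z L g a b) as [Hgl Hgr]; [lra | auto |].
    rewrite <- (RInt_Chasles f a z b), <- (RInt_Chasles g a z b)
      by (eapply ex_RInt_constant_between; eauto; lra).
    apply Rplus_le_compat; apply IH; auto; try lra;
      intros t Ht Hn; (apply Hle'; [lra | intros ->; lra | exact Hn]).
Qed.

Lemma piecewise_constant_const {A : Type} (c : A) : piecewise_constant (fun _ : R => c).
Proof. exists []. intros ? ? ? ? ? ?. reflexivity. Qed.

Lemma piecewise_constant_comb {A B C : Type} (h : A -> B -> C) (f : R -> A) (g : R -> B) :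
  piecewise_constant f -> piecewise_constant g -> piecewise_constant (fun t => h (f t) (g t)).
Proof.
  intros [L1 H1] [L2 H2]. exists (L1 ++ L2). intros t1 t2 ? ? ? Hav.
  rewrite (H1 t1 t2), (H2 t1 t2); auto; intros z Hz; apply Hav, in_or_app; auto.
Qed.

Lemma ex_RInt_piecewise_constant (f : R -> R) a b :
  piecewise_constant f -> 0 <= a -> a <= b -> b <= 1 -> ex_RInt f a b.
Proof.
  intros [L H] ? ? ?. apply (ex_RInt_constant_between L); auto.
  apply (constant_between_sub L f 0 1); auto.
Qed.

Lemma integral01_piecewise_constant (f : R -> R) : piecewise_constant f -> integral01 f = RInt f 0 1.
Proof.
  intros Hf. unfold integral01.
  destruct (excluded_middle_informative _) as [Hi|Hn].
  - symmetry. apply RInt_Reals.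
  - exfalso. apply Hn. constructor. apply ex_RInt_Reals_0.
    apply ex_RInt_piecewise_constant; auto; lra.
Qed.

Lemma RInt_le_except (P : list R) (f g : R -> R) :
  piecewise_constant f -> piecewise_constant g ->
  (forall t, 0 < t < 1 -> ~ In t P -> f t <= g t) -> RInt f 0 1 <= RInt g 0 1.
Proof.
  intros [Lf Hf] [Lg Hg] Hle.
  apply (RInt_le_constant_between (Lf ++ Lg ++ P)); [lra | | |].
  - apply (constant_between_incl Lf); auto. intros z Hz. apply in_or_app; auto.
  - apply (constant_between_incl Lg); auto. intros z Hz. apply in_or_app; right; apply in_or_app; auto.
  - intros t Ht Hn. apply Hle; auto. intros Hp. apply Hn. apply in_or_app; right; apply in_or_app; auto.
Qed.

Lemma RInt_eq_except (P : list R) (f g : R -> R) :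
  piecewise_constant f -> piecewise_constant g ->
  (forall t, 0 < t < 1 -> ~ In t P -> f t = g t) -> RInt f 0 1 = RInt g 0 1.
Proof.
  intros Hf Hg Heq. apply Rle_antisym; apply (RInt_le_except P); auto;
    intros t Ht Hn; rewrite (Heq t Ht Hn); lra.
Qed.

Definition ind (u v t : R) : R := if Rlt_dec u t then if Rlt_dec t v then 1 else 0 else 0.

Lemma piecewise_constant_ind u v : piecewise_constant (ind u v).
Proof.
  exists [u; v]. intros t1 t2 ? ? ? Hav. unfold ind.
  destruct (Hav u) as [Hu|Hu], (Hav v) as [Hv|Hv]; simpl; auto;
    repeat destruct Rlt_dec; auto; lra.
Qed.

Lemma RInt_ind u v : 0 <= u <= v -> v <= 1 -> RInt (ind u v) 0 1 = v - u.
Proof.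
  intros Huv Hv.
  assert (Hex : forall a b, 0 <= a -> a <= b -> b <= 1 -> ex_RInt (ind u v) a b)
    by (intros; apply ex_RInt_piecewise_constant; auto; apply piecewise_constant_ind).
  assert (Hpiece : forall a b c, a <= b -> (forall t, a < t < b -> ind u v t = c) ->
            RInt (ind u v) a b = (b - a) * c).
  { intros a b c Hab Hc. rewrite (RInt_ext _ (fun _ => c)).
    - rewrite RInt_const. reflexivity.
    - intros t Ht. rewrite Rmin_left, Rmax_right in Ht by lra. auto. }
  rewrite <- (RInt_Chasles (ind u v) 0 v 1), <- (RInt_Chasles (ind u v) 0 u v) by (apply Hex; lra).
  unfold plus; simpl.
  rewrite (Hpiece 0 u 0), (Hpiece u v 1), (Hpiece v 1 0); try lra;
    intros t Ht; unfold ind; repeat destruct Rlt_dec; lra.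
Qed.

Fixpoint step (l : list (R * R * R)) (t : R) : R :=
  match l with
  | [] => 0
  | (c, u, v) :: l' => c * ind u v t + step l' t
  end.

Fixpoint step_mass (l : list (R * R * R)) : R :=
  match l with
  | [] => 0
  | (c, u, v) :: l' => c * (v - u) + step_mass l'
  end.

Definition steps_in_unit (l : list (R * R * R)) : Prop :=
  List.Forall (fun '(_, u, v) => 0 <= u <= v /\ v <= 1) l.

Lemma piecewise_constant_step l : piecewise_constant (step l).
Proof.
  induction l as [|[[c u] v] l IH]; simpl; [apply piecewise_constant_const|].
  apply (piecewise_constant_comb (fun a b => c * a + b)); auto using piecewise_constant_ind.
Qed.

Lemma piecewise_constant_affine a (f g : R -> R) :
  piecewise_constant f -> piecewise_constant g -> piecewise_constant (fun t => a * f t + g t).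
Proof. apply (piecewise_constant_comb (fun u v => a * u + v)). Qed.

Lemma RInt_affine (a : R) (f g : R -> R) :
  piecewise_constant f -> piecewise_constant g ->
  RInt (fun t => a * f t + g t) 0 1 = a * RInt f 0 1 + RInt g 0 1.
Proof.
  intros Hf Hg.
  assert (Hex : forall h : R -> R, piecewise_constant h -> ex_RInt h 0 1)
    by (intros; apply ex_RInt_piecewise_constant; auto; lra).
  rewrite (RInt_plus (fun t => a * f t) g) by (auto; apply (ex_RInt_scal f 0 1 a); auto).
  rewrite (RInt_scal f) by auto. reflexivity.
Qed.

Lemma RInt_step l : steps_in_unit l -> RInt (step l) 0 1 = step_mass l.
Proof.
  induction l as [|[[c u] v] l IH]; intros Hl; simpl.
  - rewrite RInt_const. unfold scal; simpl; unfold mult; simpl. ring.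
  - inversion Hl as [|? ? Huv Hl']; subst.
    rewrite RInt_affine by auto using piecewise_constant_ind, piecewise_constant_step.
    rewrite RInt_ind, IH by tauto. reflexivity.
Qed.

Lemma RInt_affine_le (P : list R) (a : R) (l : list (R * R * R)) (f g : R -> R) :
  piecewise_constant f -> piecewise_constant g -> steps_in_unit l ->
  (forall t, 0 < t < 1 -> ~ In t P -> a * f t + step l t <= g t) ->
  a * RInt f 0 1 + step_mass l <= RInt g 0 1.
Proof.
  intros Hf Hg Hl Hle. rewrite <- RInt_step, <- RInt_affine by auto using piecewise_constant_step.
  apply (RInt_le_except P); auto using piecewise_constant_affine, piecewise_constant_step.
Qed.

Ltac solve_steps_in_unit :=
  unfold steps_in_unit; repeat (apply Forall_cons; [simpl; lra|]); apply Forall_nil.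

Definition sum_over (l : list nat) (f : nat -> R) : R := fold_right Rplus 0 (map f l).

Definition bump (a : nat) (c : R) (j : nat) : R := if Nat.eqb j a then c else 0.

Lemma sum_over_le l f g : (forall j, In j l -> f j <= g j) -> sum_over l f <= sum_over l g.
Proof.
  unfold sum_over. induction l as [|a l IH]; intros H; simpl; [lra|].
  apply Rplus_le_compat; [apply H; left; auto | apply IH; intros; apply H; right; auto].
Qed.

Lemma sum_over_plus l f g : sum_over l (fun j => f j + g j) = sum_over l f + sum_over l g.
Proof. unfold sum_over. induction l as [|a l IH]; simpl; [lra|]. rewrite IH. lra. Qed.

Lemma sum_over_scal l a f : sum_over l (fun j => a * f j) = a * sum_over l f.
Proof. unfold sum_over. induction l as [|b l IH]; simpl; [lra|]. rewrite IH. lra. Qed.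

Lemma sum_over_const l c : sum_over l (fun _ => c) = INR (length l) * c.
Proof.
  unfold sum_over. induction l as [|a l IH]; simpl length; [simpl; lra|].
  rewrite S_INR. simpl. rewrite IH. lra.
Qed.

Lemma sum_over_bump l a c : NoDup l -> In a l -> sum_over l (bump a c) = c.
Proof.
  induction l as [|b l IH]; intros Hnd Ha; [destruct Ha|]. inversion Hnd as [|? ? Hb Hl]; subst.
  unfold sum_over in *; simpl. unfold bump at 1. destruct Ha as [->|Ha].
  - rewrite Nat.eqb_refl.
    assert (H0 : forall l', ~ In a l' -> fold_right Rplus 0 (map (bump a c) l') = 0).
    { induction l' as [|d l' IH']; intros Hn; simpl; auto. unfold bump at 1.
      destruct (Nat.eqb_spec d a) as [->|_]; [destruct Hn; left; auto|].
      rewrite IH'; [lra | intros Hin; apply Hn; right; auto]. }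
    rewrite H0 by auto. lra.
  - destruct (Nat.eqb_spec b a) as [->|_]; [contradiction|]. rewrite IH; auto. lra.
Qed.

Lemma sum_over_nonneg l f : (forall j, In j l -> 0 <= f j) -> 0 <= sum_over l f.
Proof.
  intros Hf. rewrite <- (Rmult_0_l (INR (length l))), Rmult_comm, <- sum_over_const.
  apply sum_over_le. auto.
Qed.

Lemma le_sum_over_term l f j :
  (forall j, In j l -> 0 <= f j) -> In j l -> f j <= sum_over l f.
Proof.
  induction l as [|a l IH]; intros Hf Hj; [destruct Hj|]. unfold sum_over; simpl.
  assert (Hl : forall j, In j l -> 0 <= f j) by (intros; apply Hf; right; auto).
  destruct Hj as [<-|Hj].
  - pose proof (sum_over_nonneg l f Hl). unfold sum_over in H. lra.
  - pose proof (Hf a (or_introl eq_refl)). pose proof (IH Hl Hj). unfold sum_over in H0. lra.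
Qed.

Lemma sum_over_le_max l f : l <> [] -> exists j, In j l /\ sum_over l f <= INR (length l) * f j.
Proof.
  intros Hl.
  assert (Hmax : exists j, In j l /\ forall j', In j' l -> f j' <= f j).
  { clear -Hl. induction l as [|a l IH]; [congruence|].
    destruct l as [|b l].
    - exists a. split; [left; auto|]. intros j' [<-|[]]. lra.
    - destruct (IH ltac:(congruence)) as [j [Hj Hle]].
      destruct (Rle_dec (f a) (f j)).
      + exists j. split; [right; auto|]. intros j' [<-|Hj']; auto.
      + exists a. split; [left; auto|]. intros j' [<-|Hj']; [lra|].
        specialize (Hle j' Hj'). lra. }
  destruct Hmax as [j [Hj Hle]]. exists j. split; auto.
  rewrite <- sum_over_const. apply sum_over_le. auto.
Qed.

Lemma sum_edges_bump k a c : (1 <= a <= k)%nat -> sum_over (seq 1 k) (bump a c) = c.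
Proof. intros. apply sum_over_bump; [apply seq_NoDup | apply in_seq; lia]. Qed.

Lemma sum_edges_const_bump k a c0 c :
  (1 <= a <= k)%nat -> sum_over (seq 1 k) (fun j => c0 + bump a c j) = INR k * c0 + c.
Proof.
  intros Ha. rewrite sum_over_plus, sum_over_const, length_seq, sum_edges_bump; auto.
Qed.

Lemma sum_edges_bump2 k a a' c c' : (1 <= a <= k)%nat -> (1 <= a' <= k)%nat ->
  sum_over (seq 1 k) (fun j => bump a c j + bump a' c' j) = c + c'.
Proof. intros Ha Ha'. rewrite sum_over_plus, !sum_edges_bump; auto. Qed.

Ltac case_edges :=
  simpl; rewrite ?Nat.eqb_refl;
  repeat match goal with |- context [Nat.eqb ?a ?b] => destruct (Nat.eqb_spec a b); try subst end;
  try congruence.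

Ltac split_abs :=
  repeat match goal with
  | |- context [Rabs ?a] =>
      destruct (Rcase_abs a); [rewrite (Rabs_left a) by lra | rewrite (Rabs_right a) by lra]
  end.

Lemma dist_sym p q : dist p q = dist q p.
Proof.
  destruct p as [|j t], q as [|j' s]; simpl; auto.
  rewrite Nat.eqb_sym. destruct (Nat.eqb j' j); [apply Rabs_minus_sym | ring].
Qed.

Lemma dist_triangle p q r :
  0 <= dist p Center -> 0 <= dist q Center -> 0 <= dist r Center ->
  dist p r <= dist p q + dist q r.
Proof.
  destruct p as [|j1 t1], q as [|j2 t2], r as [|j3 t3]; simpl; intros; try lra;
    case_edges; split_abs; lra.
Qed.

Lemma valid_dist_center_nonneg k p : valid k p -> 0 <= dist p Center.
Proof. destruct p; simpl; lra. Qed.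

Lemma dist_pos k p q : valid k p -> valid k q -> p <> q -> 0 < dist p q.
Proof.
  destruct p as [|j1 t1], q as [|j2 t2]; simpl; intros Hp Hq Hpq; try lra; [congruence|].
  destruct (Nat.eqb_spec j1 j2); [subst | lra].
  apply Rabs_pos_lt. intros E. apply Hpq. f_equal. lra.
Qed.

Lemma point_eqb_iff p q : point_eqb p q = true <-> p = q.
Proof.
  destruct p as [|j t], q as [|j' s]; simpl; split; intros H; try congruence.
  - apply andb_prop in H as [H1 H2]. apply Nat.eqb_eq in H1.
    destruct (Req_EM_T t s); [subst; auto | discriminate].
  - inversion H; subst. rewrite Nat.eqb_refl. destruct (Req_EM_T s s); auto.
Qed.

Lemma point_eqb_refl p : point_eqb p p = true.
Proof. apply point_eqb_iff. reflexivity. Qed.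

Lemma length_filter_eqb_seq n i :
  (i < n)%nat -> length (filter (fun m => Nat.eqb m i) (seq 0 n)) = 1%nat.
Proof.
  induction n as [|n IH]; intros Hi; [lia|].
  rewrite seq_S, filter_app, length_app. simpl. destruct (Nat.eqb_spec n i) as [->|Hne].
  - rewrite (filter_ext_in _ (fun _ => false)), filter_false; [reflexivity|].
    intros a Ha. apply in_seq in Ha. apply Nat.eqb_neq. lia.
  - rewrite IH by lia. simpl. lia.
Qed.

Section Shares.

Variables (n : nat) (x : profile).

Lemma closestb_iff y m :
  closestb n x y m = true <-> forall m', (m' < n)%nat -> dist y (x m) <= dist y (x m').
Proof.
  unfold closestb. rewrite forallb_forall. split; intros H m' Hm'.
  - specialize (H m' ltac:(apply in_seq; lia)). destruct Rle_dec; auto; discriminate.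
  - apply in_seq in Hm'. destruct Rle_dec; auto. exfalso. apply n0, H. lia.
Qed.

Lemma card_at_pos i : (i < n)%nat -> (1 <= card_at n x (x i))%nat.
Proof.
  intros Hi. unfold card_at. destruct (filter _ _) eqn:E; simpl; [|lia].
  assert (Hin : In i (filter (fun m => point_eqb (x m) (x i)) (seq 0 n)))
    by (apply filter_In; split; [apply in_seq; lia | apply point_eqb_refl]).
  rewrite E in Hin. destruct Hin.
Qed.

Lemma card_at_le p : (card_at n x p <= n)%nat.
Proof. unfold card_at. rewrite <- (length_seq n 0) at 2. apply filter_length_le. Qed.

Lemma card_at_occupied p : (1 <= card_at n x p)%nat -> exists i, (i < n)%nat /\ x i = p.
Proof.
  unfold card_at. intros H.
  destruct (filter (fun m => point_eqb (x m) p) (seq 0 n)) as [|i l] eqn:Ef; simpl in H; [lia|].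
  assert (Hi : In i (filter (fun m => point_eqb (x m) p) (seq 0 n))) by (rewrite Ef; left; auto).
  apply filter_In in Hi as [Hi Hp]. apply in_seq in Hi. apply point_eqb_iff in Hp.
  exists i. split; [lia | auto].
Qed.

Lemma card_at_two p m1 m2 :
  (m1 < n)%nat -> (m2 < n)%nat -> m1 <> m2 -> x m1 = p -> x m2 = p -> (2 <= card_at n x p)%nat.
Proof.
  intros. unfold card_at. change 2%nat with (length [m1; m2]). apply NoDup_incl_length.
  - constructor; [simpl; intuition | constructor; [simpl; auto | constructor]].
  - intros z Hz. apply filter_In. simpl in Hz.
    destruct Hz as [<-|[<-|[]]]; (split; [apply in_seq; lia | apply point_eqb_iff; auto]).
Qed.

Lemma card_at_one_alone i m :
  (i < n)%nat -> card_at n x (x i) = 1%nat -> (m < n)%nat -> m <> i -> x m <> x i.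
Proof. intros Hi H1 Hm Hmi E. pose proof (card_at_two (x i) m i Hm Hi Hmi E eq_refl). lia. Qed.

(* [n_closest_locs] counts a location through the first player standing there. *)
Lemma first_player_at i : exists m0, (m0 <= i)%nat /\ x m0 = x i /\
  forallb (fun m' => negb (point_eqb (x m') (x m0))) (seq 0 m0) = true.
Proof.
  induction i as [i IH] using lt_wf_ind.
  destruct (forallb (fun m' => negb (point_eqb (x m') (x i))) (seq 0 i)) eqn:E.
  - exists i. auto.
  - apply Bool.not_true_iff_false in E. rewrite forallb_forall in E.
    apply not_all_ex_not in E as [m' Hm']. apply imply_to_and in Hm' as [Hm' Hne].
    apply in_seq in Hm'. apply Bool.not_true_iff_false, Bool.negb_false_iff, point_eqb_iff in Hne.
    destruct (IH m' ltac:(lia)) as [m0 [? [? ?]]]. exists m0. repeat split; auto; [lia | congruence].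
Qed.

Lemma n_closest_locs_pos y i :
  (i < n)%nat -> closestb n x y i = true -> (1 <= n_closest_locs n x y)%nat.
Proof.
  intros Hi Hc. destruct (first_player_at i) as [m0 [Hm0 [Ex Hf]]].
  unfold n_closest_locs. destruct (filter _ _) eqn:E; simpl; [|lia].
  assert (Hin : In m0 (filter (fun m => closestb n x y m &&
                 forallb (fun m' => negb (point_eqb (x m') (x m))) (seq 0 m)) (seq 0 n))).
  { apply filter_In. split; [apply in_seq; lia|].
    rewrite Hf, andb_true_r. unfold closestb in *. rewrite Ex. exact Hc. }
  rewrite E in Hin. destruct Hin.
Qed.

Lemma n_closest_locs_le y : (n_closest_locs n x y <= n)%nat.
Proof. unfold n_closest_locs. rewrite <- (length_seq n 0) at 2. apply filter_length_le. Qed.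

Lemma share_nonneg i y : 0 <= share n x i y.
Proof.
  unfold share. destruct closestb; [|lra].
  pose proof (pos_INR (n_closest_locs n x y)). pose proof (pos_INR (card_at n x (x i))).
  destruct (Req_dec (INR (n_closest_locs n x y) * INR (card_at n x (x i))) 0) as [E|E].
  - rewrite E, Rinv_0. lra.
  - apply Rlt_le, Rinv_0_lt_compat.
    assert (0 <= INR (n_closest_locs n x y) * INR (card_at n x (x i))) by nra. lra.
Qed.

Lemma share_le_inv_card i y : (i < n)%nat -> share n x i y <= / INR (card_at n x (x i)).
Proof.
  intros Hi. pose proof (le_INR _ _ (card_at_pos i Hi)) as Hc. simpl in Hc.
  unfold share. destruct (closestb n x y i) eqn:E.
  - pose proof (le_INR _ _ (n_closest_locs_pos y i Hi E)) as Hl. simpl in Hl.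
    rewrite Rinv_mult. rewrite <- (Rmult_1_l (/ INR (card_at n x (x i)))) at 2.
    apply Rmult_le_compat_r; [apply Rlt_le, Rinv_0_lt_compat; lra|].
    rewrite <- Rinv_1. apply Rinv_le_contravar; lra.
  - apply Rlt_le, Rinv_0_lt_compat. lra.
Qed.

Lemma card_mul_share_le_1 i y : (i < n)%nat -> INR (card_at n x (x i)) * share n x i y <= 1.
Proof.
  intros Hi. pose proof (le_INR _ _ (card_at_pos i Hi)) as Hc. simpl in Hc.
  pose proof (share_le_inv_card i y Hi).
  apply Rmult_le_compat_l with (r := INR (card_at n x (x i))) in H; [|lra].
  rewrite Rinv_r in H; lra.
Qed.

Lemma share_le_1 i y : (i < n)%nat -> share n x i y <= 1.
Proof.
  intros Hi. pose proof (card_mul_share_le_1 i y Hi). pose proof (share_nonneg i y).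
  pose proof (le_INR _ _ (card_at_pos i Hi)) as Hc. simpl in Hc. nra.
Qed.

Lemma share_eq_0 i y m : (m < n)%nat -> dist y (x m) < dist y (x i) -> share n x i y = 0.
Proof.
  intros Hm Hlt. unfold share. destruct (closestb n x y i) eqn:E; auto.
  apply closestb_iff with (m' := m) in E; auto. lra.
Qed.

Lemma share_pos_closest i y m : 0 < share n x i y -> (m < n)%nat -> dist y (x i) <= dist y (x m).
Proof.
  intros Hpos Hm. destruct (Rle_dec (dist y (x i)) (dist y (x m))) as [|Hlt]; auto.
  rewrite (share_eq_0 i y m) in Hpos by (auto; lra). lra.
Qed.

Lemma share_ge_inv_sq i y :
  (i < n)%nat -> closestb n x y i = true -> / (INR n * INR n) <= share n x i y.
Proof.
  intros Hi Hc. unfold share. rewrite Hc.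
  pose proof (le_INR _ _ (n_closest_locs_pos y i Hi Hc)). pose proof (le_INR _ _ (card_at_pos i Hi)).
  pose proof (le_INR _ _ (n_closest_locs_le y)). pose proof (le_INR _ _ (card_at_le (x i))).
  simpl in *. apply Rinv_le_contravar; [apply Rmult_lt_0_compat; lra | apply Rmult_le_compat; lra].
Qed.

Lemma share_eq_1 i y :
  (i < n)%nat -> (forall m, (m < n)%nat -> m <> i -> dist y (x i) < dist y (x m)) ->
  share n x i y = 1.
Proof.
  intros Hi H.
  assert (Hc : closestb n x y i = true).
  { apply closestb_iff. intros m Hm. destruct (Nat.eq_dec m i); [subst; lra|]. apply Rlt_le, H; auto. }
  assert (Hsingle : forall f : nat -> bool, (forall m, (m < n)%nat -> f m = Nat.eqb m i) ->
            length (filter f (seq 0 n)) = 1%nat).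
  { intros f Hf. rewrite (filter_ext_in f (fun m => Nat.eqb m i))
      by (intros m Hm; apply in_seq in Hm; apply Hf; lia).
    apply length_filter_eqb_seq. exact Hi. }
  unfold share. rewrite Hc.
  replace (n_closest_locs n x y) with 1%nat.
  2: { symmetry. apply Hsingle. intros m Hm. destruct (Nat.eqb_spec m i) as [->|Hmi].
       - rewrite Hc. simpl. apply forallb_forall. intros m' Hm'. apply in_seq in Hm'.
         destruct (point_eqb (x m') (x i)) eqn:E; auto. apply point_eqb_iff in E.
         specialize (H m' ltac:(lia) ltac:(lia)). rewrite E in H. lra.
       - destruct (closestb n x y m) eqn:E; auto.
         apply closestb_iff with (m' := i) in E; auto. specialize (H m Hm Hmi). lra. }
  replace (card_at n x (x i)) with 1%nat.
  2: { symmetry. apply Hsingle. intros m Hm. destruct (Nat.eqb_spec m i) as [->|Hmi].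
       - apply point_eqb_refl.
       - destruct (point_eqb (x m) (x i)) eqn:E; auto. apply point_eqb_iff in E.
         specialize (H m Hm Hmi). rewrite E in H. lra. }
  simpl. field.
Qed.

End Shares.

(* Along an edge the distance to a fixed point [p] is [t + c] or [|t - c|], with [c] the
   distance from [p] to the center; so comparing two such distances changes outcome only at
   the points of [comparison_breaks]. *)
Definition comparison_breaks (c d : R) : list R := [c; d; (c + d) / 2; (c - d) / 2; (d - c) / 2].

Lemma dist_along_edge j p :
  (forall t, dist (OnEdge j t) p = t + dist p Center) \/
  (forall t, dist (OnEdge j t) p = Rabs (t - dist p Center)).
Proof. destruct p as [|j' s]; simpl; [left; intros; ring | destruct (Nat.eqb j j'); auto]. Qed.

Definition dist_leb (y p q : point) : bool :=
  if Rle_dec (dist y p) (dist y q) then true else false.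

Lemma dist_leb_constant_between j p q :
  constant_between (comparison_breaks (dist p Center) (dist q Center))
    (fun t => dist_leb (OnEdge j t) p q) 0 1.
Proof.
  unfold dist_leb. set (c := dist p Center). set (d := dist q Center).
  intros t1 t2 ? ? ? Hav.
  assert (Hc : c < t1 \/ t2 < c) by (apply Hav; simpl; tauto).
  assert (Hd : d < t1 \/ t2 < d) by (apply Hav; simpl; tauto).
  assert (Hcd : (c + d) / 2 < t1 \/ t2 < (c + d) / 2) by (apply Hav; simpl; tauto).
  assert (Hdc1 : (c - d) / 2 < t1 \/ t2 < (c - d) / 2) by (apply Hav; simpl; tauto).
  assert (Hdc2 : (d - c) / 2 < t1 \/ t2 < (d - c) / 2) by (apply Hav; simpl; tauto).
  destruct (dist_along_edge j p) as [Hp|Hp], (dist_along_edge j q) as [Hq|Hq];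
    rewrite !Hp, !Hq; fold c d;
    destruct (Rle_dec _ _) as [C1|C1], (Rle_dec _ _) as [C2|C2]; auto;
    exfalso; revert C1 C2; split_abs; lra.
Qed.

Definition share_breaks (n : nat) (x : profile) : list R :=
  flat_map (fun mm => comparison_breaks (dist (x (fst mm)) Center) (dist (x (snd mm)) Center))
    (list_prod (seq 0 n) (seq 0 n)).

Lemma forallb_ext_in {A : Type} (f g : A -> bool) l :
  (forall a, In a l -> f a = g a) -> forallb f l = forallb g l.
Proof. induction l as [|a l IH]; simpl; intros H; auto. rewrite H, IH; auto. Qed.

Lemma share_constant_between n x i j :
  (i < n)%nat -> constant_between (share_breaks n x) (fun t => share n x i (OnEdge j t)) 0 1.
Proof.
  intros Hi t1 t2 ? ? ? Hav.
  assert (Hcl : forall m, In m (seq 0 n) ->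
            closestb n x (OnEdge j t1) m = closestb n x (OnEdge j t2) m).
  { intros m Hm. apply forallb_ext_in. intros m' Hm'.
    apply (dist_leb_constant_between j (x m) (x m')); auto.
    intros z Hz. apply Hav. apply in_flat_map. exists (m, m'). split; auto. apply in_prod; auto. }
  unfold share, n_closest_locs. rewrite Hcl by (apply in_seq; lia).
  erewrite filter_ext_in; [reflexivity|]. intros m Hm. simpl. rewrite Hcl; auto.
Qed.

Lemma piecewise_constant_share n x i j :
  (i < n)%nat -> piecewise_constant (fun t => share n x i (OnEdge j t)).
Proof. intros Hi. exists (share_breaks n x). apply share_constant_between, Hi. Qed.

Section Deviations.

Variables (n : nat) (x : profile) (i : nat) (q : point).
Hypothesis Hi : (i < n)%nat.

Lemma update_eq : update x i q i = q.
Proof. unfold update. rewrite Nat.eqb_refl. reflexivity. Qed.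

Lemma update_neq m : m <> i -> update x i q m = x m.
Proof. intros. unfold update. destruct (Nat.eqb_spec m i); [contradiction | reflexivity]. Qed.

Lemma share_update_eq_1 y :
  (forall m, (m < n)%nat -> m <> i -> dist y q < dist y (x m)) -> share n (update x i q) i y = 1.
Proof.
  intros H. apply share_eq_1; auto. intros m Hm Hmi. rewrite update_eq, update_neq; auto.
Qed.

Lemma share_update_closer y :
  0 < share n x i y -> dist y q < dist y (x i) -> share n (update x i q) i y = 1.
Proof.
  intros Hpos Hq. apply share_update_eq_1. intros m Hm Hmi.
  pose proof (share_pos_closest n x i y m Hpos Hm). lra.
Qed.

Lemma card_mul_share_le_update y :
  (0 < share n x i y -> dist y q < dist y (x i)) ->
  INR (card_at n x (x i)) * share n x i y <= share n (update x i q) i y.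
Proof.
  intros Hq. destruct (Rle_lt_or_eq_dec _ _ (share_nonneg n x i y)) as [Hpos|Hz].
  - rewrite share_update_closer by auto. apply card_mul_share_le_1, Hi.
  - rewrite <- Hz, Rmult_0_r. apply share_nonneg.
Qed.

Lemma share_le_update y :
  (0 < share n x i y -> dist y q < dist y (x i)) -> share n x i y <= share n (update x i q) i y.
Proof.
  intros Hq. pose proof (card_mul_share_le_update y Hq). pose proof (share_nonneg n x i y).
  pose proof (le_INR _ _ (card_at_pos n x i Hi)). simpl in *. nra.
Qed.

End Deviations.

(** * Edge payoffs and deviations *)

Definition edge_payoff (n : nat) (x : profile) (i j : nat) : R :=
  RInt (fun t => share n x i (OnEdge j t)) 0 1.

Definition part_payoff (n : nat) (x : profile) (i j : nat) (u v : R) : R :=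
  RInt (fun t => share n x i (OnEdge j t) * ind u v t) 0 1.

Lemma payoff_sum_edges k n x i :
  (i < n)%nat -> payoff k n x i = sum_over (seq 1 k) (edge_payoff n x i).
Proof.
  intros Hi. unfold payoff, sum_over. f_equal. apply map_ext. intros j.
  apply integral01_piecewise_constant, piecewise_constant_share, Hi.
Qed.

Section EdgePayoffs.

Variables (k n : nat) (x : profile) (i : nat).
Hypothesis Hi : (i < n)%nat.

Lemma edge_payoff_affine_le (P : list R) (a : R) (l : list (R * R * R)) (x' : profile) j :
  steps_in_unit l ->
  (forall t, 0 < t < 1 -> ~ In t P ->
     a * share n x i (OnEdge j t) + step l t <= share n x' i (OnEdge j t)) ->
  a * edge_payoff n x i j + step_mass l <= edge_payoff n x' i j.
Proof. intros. apply (RInt_affine_le P); auto using piecewise_constant_share. Qed.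

Lemma part_payoff_affine_le (P : list R) (a : R) (l : list (R * R * R)) (x' : profile) j u v :
  steps_in_unit l ->
  (forall t, 0 < t < 1 -> ~ In t P ->
     a * (share n x i (OnEdge j t) * ind u v t) + step l t <= share n x' i (OnEdge j t)) ->
  a * part_payoff n x i j u v + step_mass l <= edge_payoff n x' i j.
Proof.
  intros. apply (RInt_affine_le P); auto using piecewise_constant_share.
  apply (piecewise_constant_comb Rmult); auto using piecewise_constant_share, piecewise_constant_ind.
Qed.

Lemma edge_payoff_nonneg j : 0 <= edge_payoff n x i j.
Proof.
  pose proof (edge_payoff_affine_le [] 0 [] x j (Forall_nil _)) as H. simpl in H.
  rewrite Rmult_0_l, Rplus_0_r in H. apply H. intros. pose proof (share_nonneg n x i (OnEdge j t)). lra.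
Qed.

Lemma piecewise_constant_share_ind j u v :
  piecewise_constant (fun t => share n x i (OnEdge j t) * ind u v t).
Proof.
  apply (piecewise_constant_comb Rmult); auto using piecewise_constant_share, piecewise_constant_ind.
Qed.

Lemma edge_payoff_le_const j c :
  (forall t, 0 < t < 1 -> share n x i (OnEdge j t) <= c) -> edge_payoff n x i j <= c.
Proof.
  intros H. replace c with (step_mass [(c, 0, 1)]) by (simpl; ring).
  rewrite <- RInt_step by solve_steps_in_unit.
  apply (RInt_le_except []); auto using piecewise_constant_step, piecewise_constant_share.
  intros t Ht _. simpl. unfold ind. do 2 (destruct Rlt_dec; [|lra]). specialize (H t Ht). lra.
Qed.

Lemma edge_payoff_split j s :
  0 <= s <= 1 -> edge_payoff n x i j = part_payoff n x i j 0 s + part_payoff n x i j s 1.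
Proof.
  intros Hs. unfold part_payoff.
  rewrite <- (Rmult_1_l (RInt (fun t => share n x i (OnEdge j t) * ind 0 s t) 0 1)).
  rewrite <- RInt_affine by apply piecewise_constant_share_ind.
  apply (RInt_eq_except [s]); auto using piecewise_constant_share.
  - apply piecewise_constant_affine; apply piecewise_constant_share_ind.
  - intros t Ht Hts. assert (t <> s) by (intros ->; apply Hts; left; auto).
    unfold ind. repeat destruct Rlt_dec; lra.
Qed.

Lemma part_payoff_empty j s : part_payoff n x i j s s = 0.
Proof.
  unfold part_payoff. rewrite (RInt_ext _ (fun _ => 0)).
  - rewrite RInt_const. unfold scal; simpl; unfold mult; simpl. ring.
  - intros t _. unfold ind. repeat destruct Rlt_dec; lra.
Qed.

Lemma edge_payoff_le_payoff j : (1 <= j <= k)%nat -> edge_payoff n x i j <= payoff k n x i.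
Proof.
  intros Hj. rewrite payoff_sum_edges by exact Hi. apply le_sum_over_term; [|apply in_seq; lia].
  intros; apply edge_payoff_nonneg.
Qed.

Lemma payoff_nonneg : 0 <= payoff k n x i.
Proof. rewrite payoff_sum_edges by exact Hi. apply sum_over_nonneg. intros; apply edge_payoff_nonneg. Qed.

Lemma payoff_deviation_ge (x' : profile) (a : R) (c : nat -> R) :
  (forall j, (1 <= j <= k)%nat -> a * edge_payoff n x i j + c j <= edge_payoff n x' i j) ->
  a * payoff k n x i + sum_over (seq 1 k) c <= payoff k n x' i.
Proof.
  intros H. rewrite !(payoff_sum_edges k n _ i Hi), <- sum_over_scal, <- sum_over_plus.
  apply sum_over_le. intros j Hj. apply in_seq in Hj. apply H. lia.
Qed.

Lemma card_mul_edge_payoff_le_update q j :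
  (forall t, 0 < t < 1 -> dist (OnEdge j t) q < dist (OnEdge j t) (x i)) ->
  INR (card_at n x (x i)) * edge_payoff n x i j <= edge_payoff n (update x i q) i j.
Proof.
  intros Hq. rewrite <- (Rplus_0_r (_ * _)).
  apply (edge_payoff_affine_le [] _ [] _ j); [constructor|].
  intros t Ht _. simpl. rewrite Rplus_0_r. apply card_mul_share_le_update; auto.
Qed.

Lemma edge_payoff_le_update q j :
  (forall t, 0 < t < 1 -> dist (OnEdge j t) q < dist (OnEdge j t) (x i)) ->
  edge_payoff n x i j <= edge_payoff n (update x i q) i j.
Proof.
  intros Hq. pose proof (card_mul_edge_payoff_le_update q j Hq). pose proof (edge_payoff_nonneg j).
  pose proof (le_INR _ _ (card_at_pos n x i Hi)). simpl in *. nra.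
Qed.

End EdgePayoffs.

Lemma le_of_le_plus_small a b d : 0 < d -> (forall eps, 0 < eps <= d -> a <= b + eps) -> a <= b.
Proof.
  intros Hd H. apply Rle_plus_epsilon. intros eps Heps.
  pose proof (H (Rmin eps d) ltac:(split; [apply Rmin_pos | apply Rmin_r]; lra)).
  pose proof (Rmin_l eps d). lra.
Qed.

Lemma exists_argmax (P : nat -> Prop) (f : nat -> R) n :
  (exists m, (m < n)%nat /\ P m) ->
  exists m0, (m0 < n)%nat /\ P m0 /\ forall m, (m < n)%nat -> P m -> f m <= f m0.
Proof.
  induction n as [|n IH]; intros [m [Hm Pm]]; [lia|].
  destruct (classic (exists m, (m < n)%nat /\ P m)) as [Ex|Nex].
  - destruct (IH Ex) as [m0 [Hm0 [Pm0 Hmax]]].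
    destruct (classic (P n /\ f m0 <= f n)) as [[Pn Hle]|Hn].
    + exists n. repeat split; auto. intros m' Hm' Pm'.
      destruct (Nat.eq_dec m' n) as [->|]; [lra|]. specialize (Hmax m' ltac:(lia) Pm'). lra.
    + exists m0. repeat split; auto. intros m' Hm' Pm'. destruct (Nat.eq_dec m' n) as [->|].
      * destruct (Rle_dec (f n) (f m0)); auto. exfalso. apply Hn. split; auto. lra.
      * apply Hmax; auto. lia.
  - assert (m = n) as -> by (destruct (Nat.eq_dec m n); auto; exfalso; apply Nex; exists m; split; auto; lia).
    exists n. repeat split; auto. intros m' Hm' Pm'.
    destruct (Nat.eq_dec m' n) as [->|]; [lra|]. exfalso. apply Nex. exists m'. split; auto. lia.
Qed.

Lemma exists_argmin (P : nat -> Prop) (f : nat -> R) n :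
  (exists m, (m < n)%nat /\ P m) ->
  exists m0, (m0 < n)%nat /\ P m0 /\ forall m, (m < n)%nat -> P m -> f m0 <= f m.
Proof.
  intros H. destruct (exists_argmax P (fun m => - f m) n H) as [m0 [? [? Hmax]]].
  exists m0. repeat split; auto. intros m Hm Pm. specialize (Hmax m Hm Pm). lra.
Qed.

Lemma exists_pos_lower_bound (P : nat -> Prop) (f : nat -> R) n :
  (forall m, (m < n)%nat -> P m -> 0 < f m) ->
  exists d, 0 < d /\ forall m, (m < n)%nat -> P m -> d <= f m.
Proof.
  intros H. destruct (classic (exists m, (m < n)%nat /\ P m)) as [Ex|Nex].
  - destruct (exists_argmin P f n Ex) as [m0 [Hm0 [Pm0 Hmin]]].
    exists (f m0). split; auto.
  - exists 1. split; [lra|]. intros m Hm Pm. exfalso. apply Nex. eauto.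
Qed.

(* Every player has a neighbourhood of consumers for which it is a closest location,
   hence a positive payoff. *)
Lemma payoff_pos k n x i :
  (1 <= k)%nat -> (i < n)%nat -> (forall m, (m < n)%nat -> valid k (x m)) -> 0 < payoff k n x i.
Proof.
  intros Hk Hi Hv.
  destruct (exists_pos_lower_bound (fun m => x m <> x i) (fun m => dist (x i) (x m)) n)
    as [d [Hd Hdm]]; [intros m Hm Hne; apply (dist_pos k); auto|].
  set (c := / (INR n * INR n)).
  assert (Hc : 0 < c).
  { unfold c. apply Rinv_0_lt_compat. assert (1 <= INR n) by (apply (le_INR 1); lia). nra. }
  assert (Hnear : forall y, 0 <= dist y Center -> dist y (x i) < d / 2 -> c <= share n x i y).
  { intros y Hy Hyd. apply share_ge_inv_sq; auto. apply closestb_iff. intros m Hm.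
    destruct (classic (x m = x i)) as [E|E]; [rewrite E; lra|].
    specialize (Hdm m Hm E).
    pose proof (dist_triangle (x i) y (x m)).
    rewrite (dist_sym (x i) y) in H.
    pose proof (valid_dist_center_nonneg k _ (Hv i Hi)).
    pose proof (valid_dist_center_nonneg k _ (Hv m Hm)). lra. }
  assert (Hsegment : forall j u v, (1 <= j <= k)%nat -> 0 <= u < v -> v <= 1 ->
            (forall t, u < t < v -> dist (OnEdge j t) (x i) < d / 2) -> 0 < payoff k n x i).
  { intros j u v Hj Huv Hv1 Hseg.
    apply Rlt_le_trans with (edge_payoff n x i j); [|apply edge_payoff_le_payoff; auto].
    apply Rlt_le_trans with (0 * edge_payoff n x i j + step_mass [(c, u, v)]); [simpl; nra|].
    apply (edge_payoff_affine_le n x i Hi [] 0 [(c, u, v)]); [solve_steps_in_unit|].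
    intros t Ht _. simpl. unfold ind. pose proof (share_nonneg n x i (OnEdge j t)).
    destruct Rlt_dec; [destruct Rlt_dec|]; try lra.
    rewrite Rmult_0_l, Rmult_1_r, Rplus_0_r, Rplus_0_l. apply Hnear; simpl; [lra|]. apply Hseg. lra. }
  pose proof (Hv i Hi) as Hvi. destruct (x i) as [|j s] eqn:Exi.
  - set (v := Rmin (d / 4) 1).
    assert (0 < v) by (apply Rmin_pos; lra).
    assert (v <= d / 4 /\ v <= 1) by (split; [apply Rmin_l | apply Rmin_r]).
    apply (Hsegment 1%nat 0 v); [lia | lra | lra |]. intros t Ht. simpl. lra.
  - simpl in Hvi. set (u := Rmax (s / 2) (s - d / 4)).
    assert (s / 2 <= u /\ s - d / 4 <= u) by (split; [apply Rmax_l | apply Rmax_r]).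
    assert (u < s) by (apply Rmax_lub_lt; lra).
    apply (Hsegment j u s); [lia | lra | lra |].
    intros t Ht. simpl. rewrite Nat.eqb_refl, Rabs_left by lra. lra.
Qed.

(** * Equilibria *)

Section Equilibrium.

Variables (k n : nat) (x : profile).
Hypothesis Hk : (3 <= k)%nat.
Hypothesis Hne : is_NE k n x.

Lemma players_valid m : (m < n)%nat -> valid k (x m).
Proof. apply (proj1 Hne). Qed.

Lemma player_on_edge i j s : (i < n)%nat -> x i = OnEdge j s -> (1 <= j <= k)%nat /\ 0 < s <= 1.
Proof. intros Hi Exi. pose proof (players_valid i Hi) as H. rewrite Exi in H. exact H. Qed.

Lemma no_profitable_deviation i q :
  (i < n)%nat -> valid k q -> payoff k n (update x i q) i <= payoff k n x i.
Proof. intros. apply (proj2 Hne); auto. Qed.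

Lemma equilibrium_payoff_pos i : (i < n)%nat -> 0 < payoff k n x i.
Proof. intros. apply payoff_pos; auto; [lia | apply players_valid]. Qed.

Lemma INR_k_ge_3 : 3 <= INR k.
Proof. apply (le_INR 3) in Hk. simpl in Hk. lra. Qed.

Lemma center_card_le : (card_at n x Center <= k)%nat.
Proof.
  destruct (le_lt_dec (card_at n x Center) k) as [|Hc]; auto. exfalso.
  destruct (card_at_occupied n x Center ltac:(lia)) as [i [Hi Exi]].
  set (c := INR (card_at n x Center)).
  assert (Hck : INR k + 1 <= c) by (unfold c; rewrite <- S_INR; apply le_INR; lia).
  pose proof INR_k_ge_3. pose proof (equilibrium_payoff_pos i Hi) as Hu.
  destruct (sum_over_le_max (seq 1 k) (edge_payoff n x i)) as [j [Hj Hmax]];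
    [destruct k; [lia | discriminate]|].
  rewrite length_seq, <- payoff_sum_edges in Hmax by exact Hi. apply in_seq in Hj.
  assert (Hdev : c * edge_payoff n x i j <= payoff k n x i).
  { apply (le_of_le_plus_small _ _ 1); [lra|]. intros eps Heps.
    set (q := OnEdge j eps).
    pose proof (no_profitable_deviation i q Hi ltac:(simpl; split; [lia | lra])).
    pose proof (edge_payoff_le_payoff k n (update x i q) i Hi j ltac:(lia)).
    enough (c * edge_payoff n x i j + step_mass [(-1, 0, eps)] <= edge_payoff n (update x i q) i j)
      by (cbn [step_mass] in *; lra).
    apply (edge_payoff_affine_le n x i Hi [eps]); [solve_steps_in_unit|].
    intros t Ht Hte. assert (t <> eps) by (intros ->; apply Hte; left; auto).
    pose proof (card_mul_share_le_1 n x i (OnEdge j t) Hi) as Hle1.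
    pose proof (share_nonneg n (update x i q) i (OnEdge j t)).
    pose proof (card_mul_share_le_update n x i q Hi (OnEdge j t)) as Hup.
    rewrite Exi in Hle1, Hup. fold c in Hle1, Hup.
    assert (Hbeyond : eps < t -> c * share n x i (OnEdge j t) <= share n (update x i q) i (OnEdge j t))
      by (intros Ht'; apply Hup; intros _; unfold q; case_edges; split_abs; lra).
    simpl. unfold ind. repeat destruct Rlt_dec; lra. }
  pose proof (edge_payoff_nonneg n x i Hi j). nra.
Qed.

Section OnePlayer.

Variables (i j : nat) (s : R).
Hypothesis Hi : (i < n)%nat.
Hypothesis Exi : x i = OnEdge j s.

Let r := INR (card_at n x (x i)).

(* Moving [eps] outwards: the deviator wins alone everything beyond [s + eps]. *)
Lemma outer_deviation_bound : r * part_payoff n x i j s 1 <= payoff k n x i.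
Proof.
  destruct (player_on_edge i j s Hi Exi) as [Hj Hs].
  pose proof (payoff_nonneg k n x i Hi) as Hu.
  destruct (Req_dec s 1) as [->|Hs1]; [rewrite part_payoff_empty; lra|].
  apply (le_of_le_plus_small _ _ (1 - s)); [lra|]. intros eps Heps.
  set (q := OnEdge j (s + eps)).
  pose proof (no_profitable_deviation i q Hi ltac:(simpl; split; [lia | lra])).
  pose proof (edge_payoff_le_payoff k n (update x i q) i Hi j Hj).
  enough (r * part_payoff n x i j s 1 + step_mass [(-1, s, s + eps)] <= edge_payoff n (update x i q) i j)
    by (cbn [step_mass] in *; lra).
  apply (part_payoff_affine_le n x i Hi [s; s + eps]); [solve_steps_in_unit|].
  intros t Ht Hts. assert (t <> s /\ t <> s + eps) as [] by (split; intros ->; apply Hts; simpl; auto).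
  pose proof (card_mul_share_le_1 n x i (OnEdge j t) Hi) as Hle1. fold r in Hle1.
  pose proof (share_nonneg n x i (OnEdge j t)). pose proof (share_nonneg n (update x i q) i (OnEdge j t)).
  pose proof (card_mul_share_le_update n x i q Hi (OnEdge j t)) as Hup. fold r in Hup.
  assert (Hbeyond : s + eps < t -> r * share n x i (OnEdge j t) <= share n (update x i q) i (OnEdge j t))
    by (intros Ht'; apply Hup; intros _; rewrite Exi; unfold q; case_edges; split_abs; lra).
  simpl. unfold ind. repeat destruct Rlt_dec; nra.
Qed.

(* Moving [eps] inwards: the deviator wins alone everything it now shares inside [s - eps]
   and everything it shares on the other edges. *)
Lemma inner_deviation_bound : r * (payoff k n x i - part_payoff n x i j s 1) <= payoff k n x i.
Proof.
  destruct (player_on_edge i j s Hi Exi) as [Hj Hs].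
  apply (le_of_le_plus_small _ _ (s / 2)); [lra|]. intros eps Heps.
  set (q := OnEdge j (s - eps)).
  pose proof (no_profitable_deviation i q Hi ltac:(simpl; split; [lia | lra])).
  enough (r * payoff k n x i + sum_over (seq 1 k) (bump j (- (r * part_payoff n x i j s 1) - eps))
          <= payoff k n (update x i q) i) by (rewrite sum_edges_bump in * by exact Hj; lra).
  apply payoff_deviation_ge; [exact Hi|]. intros j' Hj'. unfold bump.
  destruct (Nat.eqb_spec j' j) as [->|Hj'j].
  - rewrite (edge_payoff_split n x i Hi j s) by lra.
    enough (r * part_payoff n x i j 0 s + step_mass [(-1, s - eps, s)] <= edge_payoff n (update x i q) i j)
      by (cbn [step_mass] in *; lra).
    apply (part_payoff_affine_le n x i Hi [s - eps; s]); [solve_steps_in_unit|].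
    intros t Ht Hts. assert (t <> s - eps /\ t <> s) as [] by (split; intros ->; apply Hts; simpl; auto).
    pose proof (card_mul_share_le_1 n x i (OnEdge j t) Hi) as Hle1. fold r in Hle1.
    pose proof (share_nonneg n x i (OnEdge j t)). pose proof (share_nonneg n (update x i q) i (OnEdge j t)).
    pose proof (card_mul_share_le_update n x i q Hi (OnEdge j t)) as Hup. fold r in Hup.
    assert (Hbelow : t < s - eps -> r * share n x i (OnEdge j t) <= share n (update x i q) i (OnEdge j t))
      by (intros Ht'; apply Hup; intros _; rewrite Exi; unfold q; case_edges; split_abs; lra).
    simpl. unfold ind. repeat destruct Rlt_dec; nra.
  - rewrite Rplus_0_r. apply card_mul_edge_payoff_le_update; auto.
    intros t Ht. rewrite Exi. unfold q. case_edges. lra.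
Qed.

End OnePlayer.

Lemma location_card_le_2 p : valid k p -> p <> Center -> (card_at n x p <= 2)%nat.
Proof.
  intros Hp Hpc. destruct (le_lt_dec (card_at n x p) 2) as [|Hc]; auto. exfalso.
  destruct (card_at_occupied n x p ltac:(lia)) as [i [Hi Exi]].
  destruct p as [|j s]; [congruence|].
  pose proof (le_INR _ _ Hc) as Hr. simpl in Hr. rewrite <- Exi in Hr.
  pose proof (outer_deviation_bound i j s Hi Exi).
  pose proof (inner_deviation_bound i j s Hi Exi).
  pose proof (equilibrium_payoff_pos i Hi). nra.
Qed.

Lemma exists_outermost j :
  (exists m s, (m < n)%nat /\ x m = OnEdge j s) ->
  exists i s, (i < n)%nat /\ x i = OnEdge j s /\
    forall m s', (m < n)%nat -> x m = OnEdge j s' -> s' <= s.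
Proof.
  intros [m0 [s0 [Hm0 E0]]].
  destruct (exists_argmax (fun m => exists s, x m = OnEdge j s) (fun m => dist (x m) Center) n)
    as [i [Hi [[s Es] Hmax]]]; [eauto|].
  exists i, s. repeat split; auto. intros m s' Hm Em.
  specialize (Hmax m Hm (ex_intro _ s' Em)). rewrite Em, Es in Hmax. exact Hmax.
Qed.

Lemma exists_inner_neighbour i j s i0 :
  (i < n)%nat -> x i = OnEdge j s -> (i0 < n)%nat -> x i0 = Center ->
  (forall m s', (m < n)%nat -> x m = OnEdge j s' -> s' <= s) ->
  (forall m, (m < n)%nat -> m <> i -> x m <> x i) ->
  exists w a, (w < n)%nat /\ 0 <= a < s /\ (x w = Center /\ a = 0 \/ x w = OnEdge j a) /\
    forall m s', (m < n)%nat -> m <> i -> x m = OnEdge j s' -> s' <= a.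
Proof.
  intros Hi Exi Hi0 Ex0 Houter Halone.
  destruct (player_on_edge i j s Hi Exi) as [Hj Hs].
  destruct (exists_argmax (fun m => m <> i /\ (x m = Center \/ on_edgeb j (x m) = true))
              (fun m => dist (x m) Center) n) as [w [Hw [[Hwi Hwpos] Hwmax]]].
  { exists i0. split; auto. split; [intros ->; congruence | left; auto]. }
  exists w, (dist (x w) Center). split; [exact Hw|].
  assert (Hinner : forall m s', (m < n)%nat -> m <> i -> x m = OnEdge j s' -> s' <= dist (x w) Center).
  { intros m s' Hm Hmi Em. specialize (Hwmax m Hm). rewrite Em in Hwmax. simpl in Hwmax.
    apply Hwmax. split; auto. right. apply Nat.eqb_refl. }
  pose proof (players_valid w Hw) as Hvw. pose proof (Halone w Hw Hwi) as Hdiff. rewrite Exi in Hdiff.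
  destruct (x w) as [|jw sw] eqn:Ew; simpl in *; [repeat split; auto; lra|].
  destruct Hwpos as [|Hjw]; [discriminate|]. apply Nat.eqb_eq in Hjw. subst jw.
  specialize (Houter w sw Hw Ew). assert (sw <> s) by (intros ->; auto).
  repeat split; auto; lra.
Qed.

(* If the outermost player [i] of an edge were alone, stepping towards its inner neighbour
   [w] (the center at worst) would win part of the segment between them and lose nothing. *)
Lemma outermost_player_shared i j s i0 :
  (i < n)%nat -> x i = OnEdge j s -> (i0 < n)%nat -> x i0 = Center ->
  (forall m s', (m < n)%nat -> x m = OnEdge j s' -> s' <= s) ->
  (2 <= card_at n x (x i))%nat.
Proof.
  intros Hi Exi Hi0 Ex0 Houter.
  destruct (le_lt_dec 2 (card_at n x (x i))) as [|Hc]; auto. exfalso.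
  pose proof (card_at_pos n x i Hi).
  assert (Halone : forall m, (m < n)%nat -> m <> i -> x m <> x i)
    by (intros; apply (card_at_one_alone n); auto; lia).
  destruct (player_on_edge i j s Hi Exi) as [Hj Hs].
  destruct (exists_inner_neighbour i j s i0) as [w [a [Hw [Ha [Ew Hinner]]]]]; auto.
  remember ((s - a) / 4) as eps eqn:Heps.
  set (q := OnEdge j (s - eps)).
  pose proof (no_profitable_deviation i q Hi ltac:(simpl; split; [lia | lra])).
  assert (Hwin : forall t, (a + s - eps) / 2 < t -> share n (update x i q) i (OnEdge j t) = 1).
  { intros t Ht. apply share_update_eq_1; auto. intros m Hm Hmi.
    pose proof (players_valid m Hm) as Hvm. unfold q. simpl dist at 1. rewrite Nat.eqb_refl.
    destruct (x m) as [|jm sm] eqn:Em; simpl in *; [split_abs; lra|].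
    destruct (Nat.eqb_spec j jm) as [<-|]; [pose proof (Hinner m sm Hm Hmi Em)|]; split_abs; lra. }
  assert (Hlost : forall t, 0 < t < (a + s) / 2 -> share n x i (OnEdge j t) = 0).
  { intros t Ht. apply (share_eq_0 n x i _ w); auto. rewrite Exi.
    destruct Ew as [[Ew ->]|Ew]; rewrite Ew; case_edges; split_abs; lra. }
  enough (payoff k n x i + sum_over (seq 1 k) (bump j (eps / 2)) <= payoff k n (update x i q) i)
    by (rewrite sum_edges_bump in * by exact Hj; lra).
  rewrite <- (Rmult_1_l (payoff k n x i)). apply payoff_deviation_ge; [exact Hi|].
  intros j' Hj'. unfold bump. destruct (Nat.eqb_spec j' j) as [->|Hj'j].
  - replace (eps / 2) with (step_mass [(1, (a + s - eps) / 2, (a + s) / 2)]) by (simpl; lra).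
    apply (edge_payoff_affine_le n x i Hi []); [solve_steps_in_unit|].
    intros t Ht _. pose proof (share_le_1 n x i (OnEdge j t) Hi).
    assert (Hinside : t <= (a + s - eps) / 2 ->
              share n x i (OnEdge j t) <= share n (update x i q) i (OnEdge j t))
      by (intros; apply share_le_update; auto; intros _; rewrite Exi; unfold q; case_edges; split_abs; lra).
    simpl. unfold ind. destruct (Rlt_dec ((a + s - eps) / 2) t); [rewrite Hwin by lra | nra].
    destruct (Rlt_dec t ((a + s) / 2)); [rewrite Hlost|]; lra.
  - rewrite Rmult_1_l, Rplus_0_r. apply edge_payoff_le_update; auto.
    intros t Ht. rewrite Exi. unfold q. case_edges. lra.
Qed.

Lemma edge_occupied i0 j :
  (i0 < n)%nat -> x i0 = Center -> (exists i, (i < n)%nat /\ x i <> Center) -> (1 <= j <= k)%nat ->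
  exists m s, (m < n)%nat /\ x m = OnEdge j s.
Proof.
  intros Hi0 Ex0 [i1 [Hi1 Ex1]] Hj. apply NNPP. intros Hempty.
  destruct (x i1) as [|j1 s1] eqn:E1; [congruence|].
  destruct (exists_outermost j1) as [i [s [Hi [Exi Houter]]]]; [eauto|].
  pose proof (outermost_player_shared i j1 s i0 Hi Exi Hi0 Ex0 Houter) as Hc2.
  destruct (player_on_edge i j1 s Hi Exi) as [Hj1 Hs].
  assert (Hhalf : payoff k n x i <= 1 / 2).
  { rewrite payoff_sum_edges, <- (sum_edges_bump k j1 (1 / 2)) by auto. apply sum_over_le.
    intros j' Hj'. apply in_seq in Hj'. apply edge_payoff_le_const; auto. intros t Ht. unfold bump.
    destruct (Nat.eqb_spec j' j1) as [->|].
    - eapply Rle_trans; [apply share_le_inv_card; auto|]. apply le_INR in Hc2. simpl in Hc2.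
      replace (1 / 2) with (/ 2) by field. apply Rinv_le_contravar; lra.
    - rewrite (share_eq_0 n x i _ i0); auto; [lra|]. rewrite Ex0, Exi. case_edges. lra. }
  set (q := OnEdge j (1 / 2)).
  pose proof (no_profitable_deviation i q Hi ltac:(simpl; split; [lia | lra])).
  pose proof (edge_payoff_le_payoff k n (update x i q) i Hi j Hj).
  enough (0 * edge_payoff n x i j + step_mass [(1, 1 / 4, 1)] <= edge_payoff n (update x i q) i j)
    by (cbn [step_mass] in *; lra).
  apply (edge_payoff_affine_le n x i Hi []); [solve_steps_in_unit|].
  intros t Ht _. pose proof (share_nonneg n (update x i q) i (OnEdge j t)).
  simpl. unfold ind. destruct (Rlt_dec (1 / 4) t); [|lra]. destruct (Rlt_dec t 1); [|lra].
  rewrite share_update_eq_1; auto; [lra|]. intros m Hm Hmi. pose proof (players_valid m Hm) as Hvm.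
  unfold q. simpl dist at 1. rewrite Nat.eqb_refl.
  destruct (x m) as [|jm sm] eqn:Em; simpl in *; [split_abs; lra|].
  destruct (Nat.eqb_spec j jm) as [<-|]; [exfalso; apply Hempty; eauto|]. split_abs; lra.
Qed.

Lemma card_at_le_card_edge j t : (card_at n x (OnEdge j t) <= card_edge n x j)%nat.
Proof.
  unfold card_at, card_edge. induction (seq 0 n) as [|m l IH]; simpl; auto.
  destruct (point_eqb (x m) (OnEdge j t)) eqn:E.
  - apply point_eqb_iff in E. rewrite E. simpl. rewrite Nat.eqb_refl. simpl. lia.
  - destruct (on_edgeb j (x m)); simpl; lia.
Qed.

Lemma outermost_pair_on_every_edge i0 j :
  (i0 < n)%nat -> x i0 = Center -> (exists i, (i < n)%nat /\ x i <> Center) -> (1 <= j <= k)%nat ->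
  (2 <= card_edge n x j)%nat /\
  exists t, (2 <= card_at n x (OnEdge j t))%nat /\
    forall i s, (i < n)%nat -> x i = OnEdge j s -> s <= t.
Proof.
  intros Hi0 Ex0 Hoff Hj.
  destruct (exists_outermost j) as [i [s [Hi [Exi Houter]]]]; [apply (edge_occupied i0); auto|].
  pose proof (outermost_player_shared i j s i0 Hi Exi Hi0 Ex0 Houter) as Hc2. rewrite Exi in Hc2.
  split; [|exists s; auto].
  pose proof (card_at_le_card_edge j s). lia.
Qed.

Section EmptyCenter.

Hypothesis Hno_center : forall m, (m < n)%nat -> x m <> Center.
Variables (i j0 : nat) (b : R).
Hypothesis Hi : (i < n)%nat.
Hypothesis Exi : x i = OnEdge j0 b.
Hypothesis Hinnermost : forall m, (m < n)%nat -> b <= dist (x m) Center.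

Let r := INR (card_at n x (x i)).

Ltac locate m Hm Em jm sm :=
  pose proof (players_valid m Hm); pose proof (Hinnermost m Hm); pose proof (Hno_center m Hm);
  destruct (x m) as [|jm sm] eqn:Em; [congruence|]; simpl in *.

Lemma innermost_on_edge : (1 <= j0 <= k)%nat /\ 0 < b <= 1.
Proof. apply (player_on_edge i j0 b Hi Exi). Qed.

(* Moving to the center, [i] wins on any other edge the stretch of length [b/2] just
   inside the midpoint towards the nearest player [h] of that edge. *)
Lemma center_deviation_other_edge j :
  j <> j0 -> (exists m s, (m < n)%nat /\ x m = OnEdge j s) ->
  r * edge_payoff n x i j + b / 2 <= edge_payoff n (update x i Center) i j.
Proof.
  intros Hjj0 [m0 [s0 [Hm0 E0]]]. destruct innermost_on_edge as [Hj0 Hb].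
  destruct (exists_argmin (fun m => exists s, x m = OnEdge j s) (fun m => dist (x m) Center) n)
    as [h [Hh [[a Eh] Hnearest]]]; [eauto|].
  assert (Hba : b <= a <= 1) by (pose proof (Hinnermost h Hh); pose proof (players_valid h Hh);
                                  rewrite Eh in *; simpl in *; lra).
  replace (b / 2) with (step_mass [(1, (a - b) / 2, a / 2)]) by (simpl; lra).
  apply (edge_payoff_affine_le n x i Hi []); [solve_steps_in_unit|].
  intros t Ht _.
  assert (Hcloser : r * share n x i (OnEdge j t) <= share n (update x i Center) i (OnEdge j t))
    by (apply card_mul_share_le_update; auto; intros _; rewrite Exi; case_edges; lra).
  simpl. unfold ind. destruct (Rlt_dec ((a - b) / 2) t); [|lra]. destruct (Rlt_dec t (a / 2)); [|lra].
  rewrite (share_eq_0 n x i _ h) by (auto; rewrite Exi, Eh; case_edges; split_abs; lra).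
  rewrite share_update_eq_1; [lra | auto |]. intros m Hm Hmi. locate m Hm Em jm sm.
  destruct (Nat.eqb_spec j jm) as [<-|]; [|lra].
  specialize (Hnearest m Hm (ex_intro _ sm Em)). rewrite Em, Eh in Hnearest. simpl in Hnearest.
  split_abs; lra.
Qed.

Lemma center_deviation_own_edge :
  r * part_payoff n x i j0 0 b - b / 2 <= edge_payoff n (update x i Center) i j0.
Proof.
  destruct innermost_on_edge as [Hj0 Hb]. unfold Rminus.
  replace (- (b / 2)) with (step_mass [(1, 0, b / 2); (-1, 0, b)]) by (simpl; lra).
  apply (part_payoff_affine_le n x i Hi []); [solve_steps_in_unit|].
  intros t Ht _. pose proof (card_mul_share_le_1 n x i (OnEdge j0 t) Hi) as Hle1. fold r in Hle1.
  pose proof (share_nonneg n x i (OnEdge j0 t)). pose proof (share_nonneg n (update x i Center) i (OnEdge j0 t)).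
  assert (Hwin : t < b / 2 -> share n (update x i Center) i (OnEdge j0 t) = 1).
  { intros Htb. apply share_update_eq_1; auto. intros m Hm Hmi. locate m Hm Em jm sm. case_edges; split_abs; lra. }
  simpl. unfold ind. repeat destruct Rlt_dec; try rewrite Hwin by lra; nra.
Qed.

Lemma center_deviation_own_edge_alone :
  card_at n x (x i) = 1%nat -> edge_payoff n x i j0 - b / 2 <= edge_payoff n (update x i Center) i j0.
Proof.
  intros Hc1. destruct innermost_on_edge as [Hj0 Hb].
  assert (Halone : forall m, (m < n)%nat -> m <> i -> x m <> x i)
    by (intros; apply (card_at_one_alone n); auto).
  pose proof (share_le_1 n x i) as Hle1. unfold Rminus. rewrite <- (Rmult_1_l (edge_payoff n x i j0)).
  destruct (classic (exists m, (m < n)%nat /\ (m <> i /\ exists s, x m = OnEdge j0 s))) as [Hother|Hnone].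
  - destruct (exists_argmin _ (fun m => dist (x m) Center) n Hother) as [h [Hh [[Hhi [a Eh]] Hnearest]]].
    assert (Hba : b < a <= 1).
    { pose proof (Hinnermost h Hh). pose proof (players_valid h Hh). pose proof (Halone h Hh Hhi).
      rewrite Eh, Exi in *. simpl in *. assert (a <> b) by (intros ->; auto). lra. }
    replace (- (b / 2)) with (step_mass [(1, 0, a / 2); (-1, 0, 1); (1, (a + b) / 2, 1)]) by (simpl; lra).
    apply (edge_payoff_affine_le n x i Hi [a / 2; (a + b) / 2]); [solve_steps_in_unit|].
    intros t Ht Hexc. assert (t <> a / 2 /\ t <> (a + b) / 2) as [] by (split; intros ->; apply Hexc; simpl; auto).
    assert (Hwin : t < a / 2 -> share n (update x i Center) i (OnEdge j0 t) = 1).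
    { intros Hta. apply share_update_eq_1; auto. intros m Hm Hmi. locate m Hm Em jm sm.
      destruct (Nat.eqb_spec j0 jm) as [<-|]; [|lra].
      specialize (Hnearest m Hm (conj Hmi (ex_intro _ sm Em))). rewrite Em, Eh in Hnearest.
      simpl in Hnearest. split_abs; lra. }
    assert (Hlost : (a + b) / 2 < t -> share n x i (OnEdge j0 t) = 0)
      by (intros; apply (share_eq_0 n x i _ h); auto; rewrite Eh, Exi; case_edges; split_abs; lra).
    pose proof (Hle1 (OnEdge j0 t) Hi). pose proof (share_nonneg n (update x i Center) i (OnEdge j0 t)).
    simpl. unfold ind. repeat destruct Rlt_dec; try rewrite Hwin by lra; try rewrite Hlost by lra; lra.
  - replace (- (b / 2)) with (step_mass [(- (b / 2), 0, 1)]) by (simpl; lra).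
    apply (edge_payoff_affine_le n x i Hi []); [solve_steps_in_unit|].
    intros t Ht _. pose proof (Hle1 (OnEdge j0 t) Hi).
    rewrite share_update_eq_1; auto.
    + simpl. unfold ind. repeat destruct Rlt_dec; lra.
    + intros m Hm Hmi. locate m Hm Em jm sm. destruct (Nat.eqb_spec j0 jm) as [<-|]; [|lra].
      exfalso. apply Hnone. eauto.
Qed.

Lemma center_deviation_gain c0 :
  (forall j, (1 <= j <= k)%nat -> exists m s, (m < n)%nat /\ x m = OnEdge j s) ->
  r * edge_payoff n x i j0 + c0 <= edge_payoff n (update x i Center) i j0 ->
  r * payoff k n x i + (INR k - 1) * (b / 2) + c0 <= payoff k n x i.
Proof.
  intros Hocc Hown. destruct innermost_on_edge as [Hj0 Hb].
  pose proof (no_profitable_deviation i Center Hi I).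
  enough (r * payoff k n x i + sum_over (seq 1 k) (fun j => b / 2 + bump j0 (c0 - b / 2) j)
          <= payoff k n (update x i Center) i)
    by (rewrite sum_edges_const_bump in * by exact Hj0; lra).
  apply payoff_deviation_ge; auto. intros j Hj. unfold bump.
  destruct (Nat.eqb_spec j j0) as [->|Hjj0]; [lra|].
  rewrite Rplus_0_r. apply center_deviation_other_edge; auto.
Qed.

Lemma all_edges_occupied_absurd :
  (forall j, (1 <= j <= k)%nat -> exists m s, (m < n)%nat /\ x m = OnEdge j s) -> False.
Proof.
  intros Hocc. destruct innermost_on_edge as [Hj0 Hb]. pose proof INR_k_ge_3.
  pose proof (equilibrium_payoff_pos i Hi).
  destruct (Nat.eq_dec (card_at n x (x i)) 1) as [Hc1|Hc].
  - assert (Hr : r = 1) by (unfold r; rewrite Hc1; reflexivity).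
    pose proof (center_deviation_own_edge_alone Hc1).
    pose proof (center_deviation_gain (- (b / 2)) Hocc) as Hgain. rewrite Hr in Hgain. nra.
  - pose proof (card_at_pos n x i Hi). assert (Hr : 2 <= r) by (unfold r; apply (le_INR 2); lia).
    pose proof center_deviation_own_edge.
    pose proof (outer_deviation_bound i j0 b Hi Exi) as Hout. fold r in Hout.
    pose proof (center_deviation_gain (- (r * part_payoff n x i j0 b 1) - b / 2) Hocc) as Hgain.
    rewrite (edge_payoff_split n x i Hi j0 b) in Hgain by lra.
    specialize (Hgain ltac:(lra)). nra.
Qed.

Section EmptyEdge.

Variable je : nat.
Hypothesis Hje : (1 <= je <= k)%nat.
Hypothesis Hje_empty : forall m s, (m < n)%nat -> x m <> OnEdge je s.

Lemma empty_edge_other : je <> j0.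
Proof. intros ->. exact (Hje_empty i b Hi Exi). Qed.

(* A shared innermost player moves to the middle of the empty edge: it gains at least [1/2]
   there, and on its own edge it loses at most [1/2] outside the stretch [(0, b/4)], which
   it now wins. *)
Lemma shared_innermost_absurd : (2 <= card_at n x (x i))%nat -> False.
Proof.
  intros Hc2. destruct innermost_on_edge as [Hj0 Hb]. pose proof empty_edge_other as Hjej0.
  assert (Hhalf : forall y, share n x i y <= 1 / 2).
  { intros y. eapply Rle_trans; [apply share_le_inv_card; auto|]. apply le_INR in Hc2. simpl in Hc2.
    replace (1 / 2) with (/ 2) by field. apply Rinv_le_contravar; lra. }
  set (q := OnEdge je (b / 2)).
  pose proof (no_profitable_deviation i q Hi ltac:(simpl; split; [lia | lra])).
  enough (1 * payoff k n x i + sum_over (seq 1 k) (fun j => bump je (1 / 2) j + bump j0 (b / 4 - 1 / 2) j)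
          <= payoff k n (update x i q) i)
    by (rewrite sum_edges_bump2 in * by assumption; lra).
  apply payoff_deviation_ge; auto. intros j Hj. unfold bump.
  destruct (Nat.eqb_spec j je) as [Ejje|Hjje], (Nat.eqb_spec j j0) as [Ejj0|Hjj0];
    [congruence | subst j | subst j |].
  - rewrite Rplus_0_r. replace (1 / 2) with (step_mass [(1 / 2, 0, 1)]) by (simpl; lra).
    apply (edge_payoff_affine_le n x i Hi []); [solve_steps_in_unit|].
    intros t Ht _. pose proof (Hhalf (OnEdge je t)).
    rewrite share_update_eq_1; auto.
    + simpl. unfold ind. repeat destruct Rlt_dec; lra.
    + intros m Hm Hmi. unfold q. simpl dist at 1. rewrite Nat.eqb_refl. locate m Hm Em jm sm.
      destruct (Nat.eqb_spec je jm) as [<-|]; [exfalso; eapply Hje_empty; eauto|]. split_abs; lra.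
  - rewrite Rplus_0_l. replace (b / 4 - 1 / 2) with (step_mass [(1, 0, b / 4); (-1 / 2, 0, 1)]) by (simpl; lra).
    apply (edge_payoff_affine_le n x i Hi [b / 4]); [solve_steps_in_unit|].
    intros t Ht Hexc. assert (t <> b / 4) by (intros ->; apply Hexc; left; auto).
    pose proof (Hhalf (OnEdge j0 t)). pose proof (share_nonneg n (update x i q) i (OnEdge j0 t)).
    assert (Hwin : t < b / 4 -> share n (update x i q) i (OnEdge j0 t) = 1).
    { intros Htb. apply share_update_eq_1; auto. intros m Hm Hmi. unfold q. locate m Hm Em jm sm.
      case_edges; split_abs; lra. }
    simpl. unfold ind. repeat destruct Rlt_dec; try rewrite Hwin by lra; lra.
  - rewrite !Rplus_0_r, Rmult_1_l. apply edge_payoff_le_update; auto.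
    intros t Ht. rewrite Exi. unfold q. case_edges. lra.
Qed.

(* A player [h] farther out than [i] moves next to the center on the empty edge: it wins that
   whole edge and loses less than its own, on which [i] keeps the stretch [(0, (sh - b)/2)]. *)
Lemma farther_player_absurd h jh sh : (h < n)%nat -> x h = OnEdge jh sh -> b < sh -> False.
Proof.
  intros Hh Exh Hbsh. destruct innermost_on_edge as [Hj0 Hb]. pose proof empty_edge_other as Hjej0.
  destruct (player_on_edge h jh sh Hh Exh) as [Hjh Hsh].
  assert (Hjhje : jh <> je) by (intros ->; exact (Hje_empty h sh Hh Exh)).
  set (q := OnEdge je b).
  pose proof (no_profitable_deviation h q Hh ltac:(simpl; split; [lia | lra])).
  enough (1 * payoff k n x h + sum_over (seq 1 k) (fun j => bump je 1 j + bump jh ((sh - b) / 2 - 1) j)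
          <= payoff k n (update x h q) h)
    by (rewrite sum_edges_bump2 in * by assumption; lra).
  apply payoff_deviation_ge; auto. intros j Hj. unfold bump.
  destruct (Nat.eqb_spec j je) as [Ejje|Hjje], (Nat.eqb_spec j jh) as [Ejjh|Hjjh];
    [congruence | subst j | subst j |].
  - rewrite Rplus_0_r. replace 1 with (step_mass [(1, 0, 1)]) at 2 by (simpl; lra).
    apply (edge_payoff_affine_le n x h Hh []); [solve_steps_in_unit|].
    intros t Ht _.
    rewrite (share_eq_0 n x h _ i) by (auto; rewrite Exi, Exh; case_edges; lra).
    rewrite share_update_eq_1; auto.
    + simpl. unfold ind. repeat destruct Rlt_dec; lra.
    + intros m Hm Hmh. unfold q. simpl dist at 1. rewrite Nat.eqb_refl. locate m Hm Em jm sm.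
      destruct (Nat.eqb_spec je jm) as [<-|]; [exfalso; eapply Hje_empty; eauto|]. split_abs; lra.
  - rewrite Rplus_0_l.
    replace ((sh - b) / 2 - 1) with (step_mass [(-1, 0, 1); (1, 0, (sh - b) / 2)]) by (simpl; lra).
    apply (edge_payoff_affine_le n x h Hh []); [solve_steps_in_unit|].
    intros t Ht _. pose proof (share_le_1 n x h (OnEdge jh t) Hh).
    pose proof (share_nonneg n (update x h q) h (OnEdge jh t)).
    assert (Hlost : t < (sh - b) / 2 -> share n x h (OnEdge jh t) = 0)
      by (intros; apply (share_eq_0 n x h _ i); auto; rewrite Exi, Exh; case_edges; split_abs; lra).
    simpl. unfold ind. repeat destruct Rlt_dec; try rewrite Hlost by lra; lra.
  - rewrite !Rplus_0_r, Rmult_1_l. apply edge_payoff_le_update; auto.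
    intros t Ht. rewrite Exh. unfold q. case_edges. lra.
Qed.

(* If all players are at distance [b] and [i] is alone, then [i] moves to the middle of the
   empty edge: it keeps its own edge and wins the stretch [(0, b/4)] of the edge of another
   player. *)
Lemma equidistant_alone_absurd :
  (2 <= n)%nat -> (forall m, (m < n)%nat -> dist (x m) Center <= b) ->
  card_at n x (x i) = 1%nat -> False.
Proof.
  intros Hn Hall Hc1. destruct innermost_on_edge as [Hj0 Hb]. pose proof empty_edge_other as Hjej0.
  assert (Halone : forall m, (m < n)%nat -> m <> i -> x m <> x i)
    by (intros; apply (card_at_one_alone n); auto).
  set (m' := if Nat.eqb i 0 then 1%nat else 0%nat).
  assert (Hm' : (m' < n)%nat /\ m' <> i) by (unfold m'; destruct (Nat.eqb_spec i 0); lia).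
  destruct Hm' as [Hm' Hm'i]. pose proof (Hall m' Hm'). pose proof (Halone m' Hm' Hm'i).
  locate m' Hm' Em' j' s'. assert (s' = b) as -> by lra.
  assert (Hj'j0 : j' <> j0) by (intros ->; rewrite Exi in *; congruence).
  assert (Hj'je : j' <> je) by (intros ->; exact (Hje_empty m' b Hm' Em')).
  assert (Hj' : (1 <= j' <= k)%nat) by tauto.
  set (q := OnEdge je (b / 2)).
  pose proof (no_profitable_deviation i q Hi ltac:(simpl; split; [lia | lra])).
  enough (1 * payoff k n x i + sum_over (seq 1 k) (bump j' (b / 4)) <= payoff k n (update x i q) i)
    by (rewrite sum_edges_bump in * by assumption; lra).
  apply payoff_deviation_ge; auto. intros j Hj. unfold bump. rewrite Rmult_1_l.
  destruct (Nat.eqb_spec j j') as [->|Hjj'].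
  - replace (b / 4) with (step_mass [(1, 0, b / 4)]) by (simpl; lra).
    rewrite <- (Rmult_1_l (edge_payoff n x i j')).
    apply (edge_payoff_affine_le n x i Hi [b / 4]); [solve_steps_in_unit|].
    intros t Ht Hexc. assert (t <> b / 4) by (intros ->; apply Hexc; left; auto).
    assert (Hwin : t < b / 4 -> share n (update x i q) i (OnEdge j' t) = 1 /\ share n x i (OnEdge j' t) = 0).
    { intros Htb. split.
      - apply share_update_eq_1; auto. intros m Hm Hmi. pose proof (Hall m Hm). unfold q. locate m Hm Em jm sm.
        case_edges; split_abs; lra.
      - apply (share_eq_0 n x i _ m'); auto. rewrite Exi, Em'. case_edges. split_abs; lra. }
    assert (Hcloser : share n x i (OnEdge j' t) <= share n (update x i q) i (OnEdge j' t))
      by (apply share_le_update; auto; intros _; rewrite Exi; unfold q; case_edges; lra).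
    simpl. unfold ind. repeat destruct Rlt_dec; try (destruct Hwin as [-> ->]; [lra|]); lra.
  - rewrite Rplus_0_r. destruct (Nat.eq_dec j j0) as [->|Hjj0].
    + rewrite <- (Rplus_0_r (edge_payoff n x i j0)), <- (Rmult_1_l (edge_payoff n x i j0)).
      apply (edge_payoff_affine_le n x i Hi [] 1 []); [constructor|].
      intros t Ht _. pose proof (share_le_1 n x i (OnEdge j0 t) Hi). rewrite share_update_eq_1; auto.
      * simpl. lra.
      * intros m Hm Hmi. pose proof (Hall m Hm). pose proof (Halone m Hm Hmi). unfold q. locate m Hm Em jm sm.
        rewrite Exi in *. destruct (Nat.eqb_spec j0 jm) as [<-|]; [assert (sm = b) as -> by lra; congruence|].
        case_edges. lra.
    + apply edge_payoff_le_update; auto.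
      intros t Ht. rewrite Exi. unfold q. case_edges; split_abs; lra.
Qed.

End EmptyEdge.

End EmptyCenter.

Lemma center_occupied : (2 <= n)%nat -> exists i, (i < n)%nat /\ x i = Center.
Proof.
  intros Hn. apply NNPP. intros Hnone.
  assert (Hno_center : forall m, (m < n)%nat -> x m <> Center) by (intros m Hm E; apply Hnone; eauto).
  destruct (exists_argmin (fun _ => True) (fun m => dist (x m) Center) n) as [i [Hi [_ Hmin]]];
    [exists 0%nat; split; [lia | auto]|].
  destruct (x i) as [|j0 b] eqn:Exi; [exact (Hno_center i Hi Exi)|].
  assert (Hinnermost : forall m, (m < n)%nat -> b <= dist (x m) Center)
    by (intros m Hm; exact (Hmin m Hm I)).
  destruct (classic (forall j, (1 <= j <= k)%nat -> exists m s, (m < n)%nat /\ x m = OnEdge j s))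
    as [Hocc|Hnocc].
  { exact (all_edges_occupied_absurd Hno_center i j0 b Hi Exi Hinnermost Hocc). }
  apply not_all_ex_not in Hnocc as [je Hje]. apply imply_to_and in Hje as [Hje Hempty].
  assert (Hje_empty : forall m s, (m < n)%nat -> x m <> OnEdge je s)
    by (intros m s Hm E; apply Hempty; eauto).
  pose proof (card_at_pos n x i Hi).
  destruct (Nat.eq_dec (card_at n x (x i)) 1) as [Hc1|Hc].
  2: { apply (shared_innermost_absurd Hno_center i j0 b Hi Exi Hinnermost je); auto; lia. }
  destruct (classic (exists h, (h < n)%nat /\ b < dist (x h) Center)) as [[h [Hh Hbh]]|Hnfar].
  - destruct (x h) as [|jh sh] eqn:Exh; [exact (Hno_center h Hh Exh)|].
    exact (farther_player_absurd Hno_center i j0 b Hi Exi Hinnermost je Hje Hje_empty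
             h jh sh Hh Exh Hbh).
  - apply (equidistant_alone_absurd Hno_center i j0 b Hi Exi Hinnermost je); auto.
    intros m Hm. apply Rnot_lt_le. intros Hlt. apply Hnfar. eauto.
Qed.

End Equilibrium.

Theorem mainTheorem20 (k n : nat) (x : profile)
  (hk : (3 <= k)%nat) (hn : (2 <= n)%nat) (hNE : is_NE k n x) :
  (* (a) *)
  (exists i, (i < n)%nat /\ x i = Center) /\
  (* (b) *)
  (forall p, valid k p -> p <> Center -> (card_at n x p <= 2)%nat) /\
  (* (c) *)
  (card_at n x Center <= k)%nat /\
  (* (d) *)
  ((exists i, (i < n)%nat /\ x i <> Center) ->
   forall j, (1 <= j <= k)%nat ->
     (2 <= card_edge n x j)%nat /\
     exists t, (2 <= card_at n x (OnEdge j t))%nat /\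
       forall i s, (i < n)%nat -> x i = OnEdge j s -> s <= t).
Proof.
  destruct (center_occupied k n x hk hNE hn) as [i0 [Hi0 Ex0]].
  split; [exists i0; auto|].
  split; [intros p Hp Hpc; exact (location_card_le_2 k n x hk hNE p Hp Hpc)|].
  split; [exact (center_card_le k n x hk hNE)|].
  intros Hoff j Hj. exact (outermost_pair_on_every_edge k n x hk hNE i0 j Hi0 Ex0 Hoff Hj).
Qed.
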